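(* Let $f:\mathbb{R}^\ell\times\mathbb{R}^m\to\mathbb{R}^\ell$ be $C^1$, let $\Lambda$ be a parameter shift with limits $\lambda_\pm$, and let $X$ define a stable path with endpoints $X_\pm$. For every sufficiently small $\epsilon>0$ there exists $S>0$ such that if $r>0$ and $N>0$ satisfy $rN>S$, then there is a unique solution $\{x_n\}$ of $x_{n+1}=f(x_n,\Lambda(rn))$ that stays within an $\epsilon$-neighborhood of $X_-$ for all $n\le -N$.
   Context: A parameter shift is a $C^1$ function $\Lambda:\mathbb{R}\to\mathbb{R}^m$ with $\lim_{s\to\pm\infty}\Lambda(s)=\lambda_\pm$ and $\lim_{s\to\pm\infty}\Lambda'(s)=0$. A stable path is given by $X:\mathbb{R}\to\mathbb{R}^\ell$ such that: $X(s)$ is a fixed point of $f(\cdot,\Lambda(s))$ for every $s$; $\{(s,X(s))\}$ is a connected curve; the limits $X_\pm=\lim_{s\to\pm\infty}X(s)$ exist and are fixed points of $f(\cdot,\lambda_\pm)$; and the spectral radius of $D_xf(X(s),\Lambda(s))$ is $<1$ for all $s\in\mathbb{R}\cup\{\pm\infty\}$ (with $X(\pm\infty)=X_\pm$, $\Lambda(\pm\infty)=\lambda_\pm$). A solution is a sequence $\{x_n\}$ satisfying $x_{n+1}=f(x_n,\Lambda(rn))$; $f(\cdot,\lambda)$ need not be invertible. *)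

From HB Require Import structures.
From mathcomp Require Import all_boot all_order all_algebra.
From mathcomp Require Import complex.
From mathcomp Require Import all_classical all_reals all_analysis.
Set Implicit Arguments. Unset Strict Implicit. Unset Printing Implicit Defensive.
Import Order.TTheory GRing.Theory Num.Theory.
Import numFieldNormedType.Exports.
Local Open Scope ring_scope.
Local Open Scope classical_set_scope.

Definition enorm (R : realType) (n : nat) (v : 'rV[R]_n) : R :=
  Num.sqrt (\sum_(i < n) v ord0 i ^+ 2).

Definition C1_prod (R : realType) (l m : nat)
  (f : 'rV[R]_l * 'rV[R]_m -> 'rV[R]_l) : Prop :=
  (forall p, differentiable f p) /\
  (forall v, continuous (fun p => 'd f p v)).

Definition C1_curve (R : realType) (m : nat) (g : R -> 'rV[R]_m) : Prop :=
  (forall s, derivable g s 1) /\ continuous g^`().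

Definition parameter_shift (R : realType) (m : nat) (Lam : R -> 'rV[R]_m)
  (lam_m lam_p : 'rV[R]_m) : Prop :=
  [/\ C1_curve Lam,
      Lam s @[s --> -oo] --> lam_m,
      Lam s @[s --> +oo] --> lam_p,
      Lam^`() s @[s --> -oo] --> (0 : 'rV[R]_m) &
      Lam^`() s @[s --> +oo] --> (0 : 'rV[R]_m)].

(* Jacobian D_x f (x, lam): entry (i, j) is the partial derivative of f_i wrt x_j *)
Definition Dxf (R : realType) (l m : nat)
  (f : 'rV[R]_l * 'rV[R]_m -> 'rV[R]_l) (x : 'rV[R]_l) (lam : 'rV[R]_m)
  : 'M[R]_l :=
  \matrix_(i < l, j < l) ('d f (x, lam) (delta_mx ord0 j, 0)) ord0 i.

Definition spectral_radius_lt1 (R : realType) (n : nat) (A : 'M[R]_n) : Prop :=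
  forall z : R[i], eigenvalue (map_mx (fun x : R => (x%:C)%C) A) z -> `|z| < 1.

Definition stable_path (R : realType) (l m : nat)
  (f : 'rV[R]_l * 'rV[R]_m -> 'rV[R]_l) (Lam : R -> 'rV[R]_m)
  (lam_m lam_p : 'rV[R]_m) (X : R -> 'rV[R]_l) (Xm Xp : 'rV[R]_l) : Prop :=
  (forall s, f (X s, Lam s) = X s) /\
  connected [set p : R * 'rV[R]_l | p.2 = X p.1] /\
  (X s @[s --> -oo] --> Xm) /\
  (X s @[s --> +oo] --> Xp) /\
  f (Xm, lam_m) = Xm /\
  f (Xp, lam_p) = Xp /\
  (forall s, spectral_radius_lt1 (Dxf f (X s) (Lam s))) /\
  spectral_radius_lt1 (Dxf f Xm lam_m) /\
  spectral_radius_lt1 (Dxf f Xp lam_p).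

Definition is_solution (R : realType) (l m : nat)
  (f : 'rV[R]_l * 'rV[R]_m -> 'rV[R]_l) (Lam : R -> 'rV[R]_m) (r : R)
  (x : int -> 'rV[R]_l) : Prop :=
  forall n : int, x (n + 1)%R = f (x n, Lam (r * n%:~R)).

From HB Require Import structures.
From mathcomp Require Import all_boot all_order all_algebra.
From mathcomp Require Import complex.
From mathcomp Require Import all_classical all_reals all_analysis.
From mathcomp Require Import ring lra zify.
Import Order.TTheory GRing.Theory Num.Theory.
Import numFieldNormedType.Exports.
Local Open Scope ring_scope.
Set Implicit Arguments. Unset Strict Implicit. Unset Printing Implicit Defensive.
Import Normc.

(* Let A = D_x f (Xm, lam_m). As its spectral radius is < 1, a Schur
   triangularisation over C puts A in lower triangular form, and the weighted
   l^1 norm of these coordinates with weights d^i, d small, is a norm in which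
   v |-> v A^T contracts. By the mean value theorem x |-> f (x, lam) is then a
   contraction of a small ball around Xm for this norm, uniformly for lam near
   lam_m, and it maps smaller balls into themselves. If rN is large, Lam (r n)
   is near lam_m for every n <= -N, so the system contracts in the past. The
   solution is the pullback limit x_n = lim_k g_(n-1) (... (g_(n-k) Xm)),
   which converges geometrically, and two solutions that stay in the ball in
   the past are squeezed together from -oo on, hence coincide. *)

(** * Norms adapted to a matrix of spectral radius < 1 *)

Section ComplexModulus.
Variable R : realType.

Lemma normr_normc (z : R[i]) : `|z| = (normc z)%:C%C.
Proof. by case: z. Qed.

Lemma normc_ge0 (z : R[i]) : 0 <= normc z.
Proof. exact: (@normr_ge0 _ (Rcomplex R)). Qed.

Lemma normcR (x : R) : normc x%:C%C = `|x|.
Proof. by rewrite /= expr0n addr0 sqrtr_sqr. Qed.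

Lemma normc_sum (I : Type) (r : seq I) (P : pred I) (F : I -> R[i]) :
  normc (\sum_(i <- r | P i) F i) <= \sum_(i <- r | P i) normc (F i).
Proof. exact: (@ler_norm_sum _ (Rcomplex R)). Qed.

Lemma normc_lt1 (z : R[i]) : `|z| < 1 -> normc z < 1.
Proof. by rewrite normr_normc ltcR. Qed.

End ComplexModulus.

Section MatrixNorm.
Variable K : realDomainType.

Lemma normr_entry_le m n (M : 'M[K]_(m, n)) i j : `|M i j| <= `|M|.
Proof.
rewrite [leRHS]/Num.Def.normr /= mx_normrE.
exact: (le_bigmax _ (fun ij : 'I_m * 'I_n => `|M ij.1 ij.2|) (i, j)).
Qed.

Lemma mx_normr_le m n (M : 'M[K]_(m, n)) c :
  0 <= c -> (forall i j, `|M i j| <= c) -> `|M| <= c.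
Proof.
move=> c0 h; rewrite [leLHS]/Num.Def.normr /= mx_normrE.
by apply: bigmax_le => // -[i j] _; exact: h.
Qed.

Lemma normr_entryB_le m n (A B C : 'M[K]_(m, n)) i j :
  A i j = B i j -> `|(A - C) i j| <= `|B - C|.
Proof.
move=> AB; have -> : (A - C) i j = (B - C) i j by rewrite !mxE AB.
exact: normr_entry_le.
Qed.

End MatrixNorm.

Lemma eigenvalue_trig_conj (F : fieldType) n (A P : 'M[F]_n) :
  P \in unitmx -> is_trig_mx (P *m A *m invmx P) ->
  forall i, eigenvalue A ((P *m A *m invmx P) i i).
Proof.
move=> Pu Tt i.
have sPA : (P *m A <= P)%MS by rewrite submx_full // row_full_unit.
have fP : row_free P by rewrite row_free_unit.
have := @eigenvalue_conjmx _ _ _ P A sPA fP ((P *m A *m invmx P) i i).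
rewrite /conjmx pinvmxE //; apply.
rewrite [_ \in _]eigenvalue_root_char char_poly_trig //.
apply/rootP; rewrite horner_prod; apply/eqP/prodf_eq0; exists i => //.
by rewrite hornerXsubC subrr.
Qed.

Lemma complex_trigonalization (R : realType) n (A : 'M[R]_n) :
  exists2 P : 'M[R[i]]_n, P \in unitmx &
    is_trig_mx (P *m map_mx (fun x => x%:C%C) A *m invmx P).
Proof.
case: n A => [|n] A.
  by exists 1%:M; [exact: unitmx1 | apply/is_trig_mxP => -[]].
have [P Pu trigP] := @Schur R[i] n.+1 (map_mx (fun x => x%:C%C) A) isT.
exists P; first exact: unitarymx_unit.
by move: trigP; rewrite /similar_to conjumx // unitarymx_unit.
Qed.

Record equivalent_norm (R : numDomainType) (V : normedZmodType R)
    (nu : V -> R) (c K : R) : Prop := {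
  equiv_normD : forall u w, nu (u + w) <= nu u + nu w;
  equiv_normN : forall v, nu (- v) = nu v;
  equiv_norm_le : forall v, nu v <= c * `|v|;
  equiv_norm_ge : forall v, `|v| <= K * nu v;
  equiv_norm_c_gt0 : 0 < c;
  equiv_norm_K_gt0 : 0 < K }.

Section EquivalentNorm.
Variables (R : numDomainType) (V : normedZmodType R) (nu : V -> R) (c K : R).
Hypothesis hnu : equivalent_norm nu c K.

Lemma equiv_norm0 : nu 0 = 0.
Proof.
apply/eqP; rewrite eq_le; apply/andP; split.
  by apply: le_trans (equiv_norm_le hnu 0) _; rewrite normr0 mulr0.
by have := equiv_normD hnu 0 0; rewrite addr0 lerDr.
Qed.

Lemma equiv_norm_ge0 v : 0 <= nu v.
Proof.
have := equiv_normD hnu v (- v); rewrite subrr equiv_norm0 (equiv_normN hnu).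
by rewrite -mulr2n -mulr_natl pmulr_rge0 // ltr0n.
Qed.

Lemma equiv_normB u v : nu (u - v) = nu (v - u).
Proof. by rewrite -(equiv_normN hnu) opprB. Qed.

Lemma equiv_norm_triangle u v w : nu (u - w) <= nu (u - v) + nu (v - w).
Proof. by have := equiv_normD hnu (u - v) (v - w); rewrite addrA subrK. Qed.

End EquivalentNorm.

Section WeightedNorm.
Variables (R : realType) (n : nat) (d : R).
Hypotheses (d_gt0 : 0 < d) (d_le1 : d <= 1).
Local Notation toC := (fun x : R => x%:C%C).

Definition weighted_cnorm (y : 'cV[R[i]]_n) : R :=
  \sum_(i < n) d ^+ i * normc (y i ord0).

Lemma weighted_cnorm_ge0 (y : 'cV[R[i]]_n) : 0 <= weighted_cnorm y.
Proof. by apply: sumr_ge0 => i _; rewrite mulr_ge0 ?exprn_ge0 ?normc_ge0 ?ltW. Qed.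

Lemma weighted_cnormD (y z : 'cV[R[i]]_n) :
  weighted_cnorm (y + z) <= weighted_cnorm y + weighted_cnorm z.
Proof.
rewrite /weighted_cnorm -big_split /=; apply: ler_sum => i _.
rewrite mxE -mulrDr; apply: ler_wpM2l; first by rewrite exprn_ge0 ?ltW.
exact: le_normcD.
Qed.

Lemma weighted_cnormN (y : 'cV[R[i]]_n) : weighted_cnorm (- y) = weighted_cnorm y.
Proof. by apply: eq_bigr => i _; rewrite mxE normcN. Qed.

Lemma normc_le_weighted_cnorm (y : 'cV[R[i]]_n) (i : 'I_n) :
  normc (y i ord0) <= weighted_cnorm y / d ^+ n.
Proof.
rewrite ler_pdivlMr ?exprn_gt0 // mulrC /weighted_cnorm (bigD1 i) //=.
apply: ler_wpDr.
  by apply: sumr_ge0 => j _; rewrite mulr_ge0 ?exprn_ge0 ?normc_ge0 ?ltW.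
by rewrite ler_wpM2r ?normc_ge0 // ler_wiXn2l // ?ltW // ltnW.
Qed.

Lemma weighted_column_le (T : 'M[R[i]]_n) rho (j : 'I_n) :
  is_trig_mx T -> (forall i : 'I_n, normc (T i i) <= rho) ->
  \sum_(i < n) d ^+ i * normc (T i j) <=
    d ^+ j * (rho + d * \sum_i \sum_k normc (T i k)).
Proof.
move=> Tt Tdiag; rewrite (bigD1 j) //= mulrDr.
apply: lerD; first by apply: ler_wpM2l; [rewrite exprn_ge0 // ltW | exact: Tdiag].
apply: (@le_trans _ _ (\sum_(i < n | i != j) d ^+ j * d * normc (T i j))).
  (* T is lower triangular: below the diagonal the weights are <= d^(j+1). *)
  apply: ler_sum => i ij; case: (ltngtP i j) => [lt|gt|eq].
  - have -> : T i j = 0 by move/is_trig_mxP: Tt; apply.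
    by rewrite normc0 mulr0 mulr_ge0 ?normc_ge0 // mulr_ge0 ?exprn_ge0 ?ltW.
  - by apply: ler_wpM2r; [exact: normc_ge0 | rewrite -exprSr ler_wiXn2l // ltW].
  - by move/val_inj: eq ij => ->; rewrite eqxx.
rewrite -mulr_sumr -mulrA; apply: ler_wpM2l; first by rewrite exprn_ge0 ?ltW.
apply: ler_wpM2l; first exact: ltW.
apply: (@le_trans _ _ (\sum_i normc (T i j))).
  by rewrite [leRHS](bigD1 j) //= lerDr normc_ge0.
apply: ler_sum => i _; rewrite [leRHS](bigD1 j) //= lerDl.
by apply: sumr_ge0 => k _; exact: normc_ge0.
Qed.

Lemma weighted_cnorm_trig_mulmx (T : 'M[R[i]]_n) rho (y : 'cV[R[i]]_n) :
  is_trig_mx T -> (forall i : 'I_n, normc (T i i) <= rho) ->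
  weighted_cnorm (T *m y) <=
    (rho + d * \sum_i \sum_j normc (T i j)) * weighted_cnorm y.
Proof.
move=> Tt Tdiag.
apply: (@le_trans _ _
  (\sum_(i < n) \sum_(j < n) d ^+ i * normc (T i j) * normc (y j ord0))).
  apply: ler_sum => i _; under eq_bigr do rewrite -mulrA.
  rewrite -mulr_sumr; apply: ler_wpM2l; first by rewrite exprn_ge0 ?ltW.
  rewrite mxE (le_trans (normc_sum _ _ _)) //; apply: ler_sum => j _.
  by rewrite normcM.
rewrite exchange_big /= mulr_sumr; apply: ler_sum => j _.
rewrite -mulr_suml mulrA [_ * d ^+ j]mulrC; apply: ler_wpM2r; first exact: normc_ge0.
exact: weighted_column_le.
Qed.

Variable P : 'M[R[i]]_n.
Hypothesis P_unit : P \in unitmx.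

Definition coords (v : 'rV[R]_n) : 'cV[R[i]]_n := P *m (map_mx toC v)^T.

Definition weighted_norm (v : 'rV[R]_n) : R := weighted_cnorm (coords v).

Lemma coordsD u w : coords (u + w) = coords u + coords w.
Proof. by rewrite /coords map_mxD linearD /= mulmxDr. Qed.

Lemma coordsN u : coords (- u) = - coords u.
Proof. by rewrite /coords map_mxN linearN /= mulmxN. Qed.

Lemma coords_mulmx (A : 'M[R]_n) v :
  coords (v *m A^T) = (P *m map_mx toC A *m invmx P) *m coords v.
Proof.
rewrite /coords map_mxM trmx_mul -[map_mx _ A^T]map_trmx trmxK.
by rewrite -!mulmxA mulKmx.
Qed.

Lemma weighted_norm_le v :
  weighted_norm v <= (\sum_i \sum_j normc (P i j)) * `|v|.
Proof.
rewrite mulr_suml; apply: ler_sum => i _.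
apply: (@le_trans _ _ (normc (coords v i ord0))).
  by rewrite ler_piMl ?normc_ge0 // exprn_ile1 // ltW.
rewrite /coords mxE (le_trans (normc_sum _ _ _)) // mulr_suml.
apply: ler_sum => j _; rewrite !mxE normcM normcR ler_wpM2l ?normc_ge0 //.
exact: normr_entry_le.
Qed.

Lemma norm_le_weighted v :
  `|v| <= (\sum_i \sum_j normc (invmx P i j)) / d ^+ n * weighted_norm v.
Proof.
have sum_ge0 (i : 'I_n) : 0 <= \sum_j normc (invmx P i j).
  by apply: sumr_ge0 => j _; exact: normc_ge0.
apply: mx_normr_le => [|i j].
  apply: mulr_ge0; last exact: weighted_cnorm_ge0.
  by apply: divr_ge0; [exact: sumr_ge0 | rewrite exprn_ge0 ?ltW].
rewrite (ord1 i) -normcR.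
have -> : (v ord0 j)%:C%C = (invmx P *m coords v) j ord0.
  by rewrite /coords mulKmx // !mxE.
rewrite mxE (le_trans (normc_sum _ _ _)) // mulrAC -mulrA.
apply: le_trans (_ : (\sum_k normc (invmx P j k)) * (weighted_norm v / d ^+ n) <= _).
  rewrite mulr_suml; apply: ler_sum => k _; rewrite normcM ler_wpM2l ?normc_ge0 //.
  exact: normc_le_weighted_cnorm.
apply: ler_wpM2r; first by rewrite divr_ge0 ?exprn_ge0 ?weighted_cnorm_ge0 // ltW.
by rewrite [leRHS](bigD1 j) //= lerDl; apply: sumr_ge0 => k _.
Qed.

End WeightedNorm.

Lemma adapted_norm (R : realType) n (A : 'M[R]_n) : spectral_radius_lt1 A ->
  exists (nu : 'rV[R]_n -> R) (c K k : R),
    [/\ equivalent_norm nu c K, 0 <= k < 1 &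
        forall v, nu (v *m A^T) <= k * nu v].
Proof.
move=> hA; have [P Pu Tt] := complex_trigonalization A.
set T := P *m _ *m _ in Tt.
set rho := \big[Num.max/0]_i normc (T i i).
have rho_ge0 : 0 <= rho by exact: bigmax_ge_id.
have rho_lt1 : rho < 1.
  by apply: bigmax_lt => // i _; apply/normc_lt1/hA/eigenvalue_trig_conj.
have Tdiag i : normc (T i i) <= rho by exact: le_bigmax.
set Mt := \sum_i \sum_j normc (T i j).
have Mt_ge0 : 0 <= Mt.
  by apply: sumr_ge0 => i _; apply: sumr_ge0 => j _; exact: normc_ge0.
set d := (1 - rho) / (2 * (Mt + 1)).
have d_gt0 : 0 < d by rewrite divr_gt0 ?subr_gt0 // mulr_gt0 // ltr_wpDl.
have dM1 : d * (Mt + 1) = (1 - rho) / 2.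
  by rewrite /d; field; rewrite gt_eqF // ltr_wpDl.
have dMt : d * Mt <= (1 - rho) / 2.
  by rewrite -dM1; apply: ler_wpM2l; [exact: ltW | rewrite lerDl].
have d_le1 : d <= 1.
  apply: le_trans (_ : d <= d * (Mt + 1)) _; last by rewrite dM1; lra.
  by rewrite mulrDr mulr1 lerDr mulr_ge0 // ltW.
have sum_ge0 (M : 'M[R[i]]_n) : 0 <= \sum_i \sum_j normc (M i j).
  by apply: sumr_ge0 => i _; apply: sumr_ge0 => j _; exact: normc_ge0.
exists (weighted_norm d P), (\sum_i \sum_j normc (P i j) + 1),
  ((\sum_i \sum_j normc (invmx P i j) + 1) / d ^+ n), (rho + d * Mt).
split; last 2 first.
- by apply/andP; split; [rewrite addr_ge0 // mulr_ge0 // ltW | lra].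
- move=> v; rewrite /weighted_norm coords_mulmx //.
  exact: weighted_cnorm_trig_mulmx.
split=> [u w|v|v|v||].
- by rewrite /weighted_norm coordsD; exact: weighted_cnormD.
- by rewrite /weighted_norm coordsN weighted_cnormN.
- apply: le_trans (weighted_norm_le d_gt0 d_le1 P v) _.
  by rewrite ler_wpM2r // lerDl.
- apply: le_trans (norm_le_weighted d_gt0 d_le1 Pu v) _.
  apply: ler_wpM2r; first exact: weighted_cnorm_ge0.
  by apply: ler_wpM2r; rewrite ?invr_ge0 ?exprn_ge0 ?lerDl // ltW.
- by rewrite ltr_wpDl.
- by rewrite divr_gt0 ?exprn_gt0 // ltr_wpDl.
Qed.

Local Open Scope classical_set_scope.

(** * Linearization in the first variable *)

Lemma segment_in_ball (R : realType) n (x0 x y : 'rV[R]_n) rho c :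
  `|x - x0| < rho -> `|y - x0| < rho -> 0 <= c <= 1 ->
  `|c *: (x - y) + y - x0| < rho.
Proof.
move=> hx hy /andP[c0 c1].
have -> : c *: (x - y) + y - x0 = c *: (x - x0) + (1 - c) *: (y - x0).
  by apply/rowP => k; rewrite !mxE; ring.
apply: le_lt_trans (ler_normD _ _) _.
rewrite !normrZ ger0_norm // ger0_norm ?subr_ge0 //.
set M := Num.max `|x - x0| `|y - x0|.
apply: le_lt_trans (_ : c * M + (1 - c) * M < rho); last first.
  by rewrite -mulrDl subrKC mul1r gt_max hx hy.
by apply: lerD; apply: ler_wpM2l; rewrite ?subr_ge0 // le_max lexx ?orbT.
Qed.

Section PartialDerivative.
Variables (R : realType) (l m : nat).
Local Notation V := ('rV[R]_l * 'rV[R]_m)%type.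

Lemma linear_first_decomp (W : lmodType R) (L : {linear V -> W}) (v : 'rV[R]_l) :
  L (v, 0) = \sum_j v ord0 j *: L ('e_j, 0).
Proof.
have pair_sum (F : 'I_l -> 'rV[R]_l) : ((\sum_i F i, 0) : V) = \sum_i ((F i, 0) : V).
  apply: (big_morph (fun u : 'rV[R]_l => ((u, 0) : V))) => // a b.
  by rewrite -[RHS]/(a + b, 0 + 0) addr0.
rewrite {1}(row_sum_delta v) pair_sum linear_sum; apply: eq_bigr => j _.
rewrite -linearZ; congr (L _).
by rewrite -[RHS]/(v ord0 j *: ('e_j : 'rV[R]_l), v ord0 j *: (0 : 'rV[R]_m)) scaler0.
Qed.

Lemma Dxf_mulmx (f : V -> 'rV[R]_l) x0 lam0 (v : 'rV[R]_l) :
  v *m (Dxf f x0 lam0)^T = 'd f (x0, lam0) (v, 0).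
Proof.
rewrite linear_first_decomp; apply/rowP => i; rewrite !mxE summxE.
by apply: eq_bigr => j _; rewrite !mxE.
Qed.

Lemma linear_first_dist_le (L1 L2 : {linear V -> 'rV[R]_l}) c v :
  (forall j, `|L1 ('e_j, 0) - L2 ('e_j, 0)| <= c) ->
  `|L1 (v, 0) - L2 (v, 0)| <= `|v| * c *+ l.
Proof.
move=> h; rewrite (linear_first_decomp L1) (linear_first_decomp L2) -sumrB.
apply: le_trans (ler_norm_sum _ _ _) _.
apply: le_trans (_ : \sum_(j < l) `|v| * c <= _); last by rewrite sumr_const card_ord.
apply: ler_sum => j _; rewrite -scalerBr normrZ.
by apply: ler_pM; rewrite ?normr_ge0 //; exact: normr_entry_le.
Qed.

Lemma partial_diff_near (f : V -> 'rV[R]_l) (p0 : V) : C1_prod f ->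
  forall eta, 0 < eta -> \forall p \near p0,
    forall v : 'rV[R]_l, `|'d f p (v, 0) - 'd f p0 (v, 0)| <= eta * `|v|.
Proof.
move=> hC eta eta0; set e := eta / l.+1%:R.
have e0 : 0 < e by rewrite divr_gt0 // ltr0n.
have near_basis (j : 'I_l) : \forall p \near p0,
    `|'d f p0 ('e_j, 0) - 'd f p ('e_j, 0)| < e.
  by have := hC.2 ('e_j, 0) p0; move/cvgrPdist_lt; apply.
near=> p.
have hp (j : 'I_l) : `|'d f p ('e_j, 0) - 'd f p0 ('e_j, 0)| <= e.
  rewrite distrC; apply: ltW; move: j.
  by near: p; exact: filter_forall _ near_basis.
move=> v; apply: le_trans (linear_first_dist_le v hp) _.
rewrite -mulr_natr -mulrA mulrC; apply: ler_wpM2r => //.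
rewrite /e mulrAC ler_pdivrMr ?ltr0n //.
by apply: ler_wpM2l; [exact: ltW | rewrite ler_nat].
Unshelve. all: by end_near.
Qed.

Lemma mvt_component (f : V -> 'rV[R]_l) (a w : V) (i : 'I_l) :
  (forall p, differentiable f p) ->
  exists2 c : R, 0 <= c <= 1 &
    (f (w + a) - f a) ord0 i = ('d f (c *: w + a) w) ord0 i.
Proof.
move=> df; pose F s := f (s *: w + a); pose phi s := F s ord0 i.
have quotE t : (fun h : R => h^-1 *: ((F \o shift t) (h *: 1) - F t)) =
    (fun h : R => h^-1 *: ((f \o shift (t *: w + a)) (h *: w) - f (t *: w + a))).
  by apply: funext => h /=; rewrite /F -[h *: 1]/(h * 1) mulr1 scalerDl addrA.
have dF s : derivable F s 1.
  by rewrite /derivable quotE; exact: diff_derivable.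
have dphi s : derivable phi s 1 by exact: ((derivable_mxP F s 1).1 (dF s) ord0 i).
have Dphi s : 'D_1 phi s = ('d f (s *: w + a) w) ord0 i.
  have := derive_mx (dF s).
  move/(congr1 (fun M : 'rV[R]_l => M ord0 i)); rewrite mxE => <-.
  by rewrite /derive quotE -/(derive _ _ _) deriveE.
have cphi : {within `[0, 1], continuous phi}.
  apply: continuous_subspaceT => x; apply: differentiable_continuous.
  by apply/derivable1_diffP; exact: dphi.
have [c c01 h] := MVT_segment ler01 (fun x _ => derivableP (dphi x)) cphi.
exists c; first by move: c01; rewrite in_itv.
move: h; rewrite subr0 mulr1 Dphi /phi /F scale1r scale0r add0r => <-.
by rewrite !mxE.
Qed.

Lemma partial_linearization (f : V -> 'rV[R]_l) x0 lam0 : C1_prod f ->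
  forall eta, 0 < eta -> exists2 rho, 0 < rho &
  forall x y lam, `|x - x0| < rho -> `|y - x0| < rho -> `|lam - lam0| < rho ->
  `|f (x, lam) - f (y, lam) - (x - y) *m (Dxf f x0 lam0)^T| <= eta * `|x - y|.
Proof.
move=> hC eta eta0.
have /nbhs_ballP [rho rho0 near_p0] := partial_diff_near (x0, lam0) hC eta0.
exists rho => // x y lam hx hy hl.
apply: mx_normr_le => [|i j]; first by rewrite mulr_ge0 // ltW.
rewrite (ord1 i) Dxf_mulmx.
pose w : V := (x - y, 0); pose a : V := (y, lam).
have wa : w + a = (x, lam) by rewrite -[w + a]/(x - y + y, 0 + lam) subrK add0r.
have [c c01 hc] := mvt_component a w j hC.1.
rewrite wa in hc.
have bc : ball (x0, lam0) rho (c *: w + a).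
  rewrite -[c *: w + a]/(c *: (x - y) + y, c *: 0 + lam) scaler0 add0r.
  by split; rewrite -ball_normE /= distrC // segment_in_ball.
apply: le_trans (normr_entryB_le _ hc) _; exact: near_p0 _ bc (x - y).
Qed.

End PartialDerivative.

(** * Pullback solutions of contracting nonautonomous systems *)

Definition contracts_on (R : numDomainType) (E : zmodType) (nu : E -> R)
    (F : E -> E) (x0 : E) (r q : R) :=
  forall x y, nu (x - x0) <= r -> nu (y - x0) <= r ->
    nu (F x - F y) <= q * nu (x - y).

Definition maps_ball (R : numDomainType) (E : zmodType) (nu : E -> R)
    (F : E -> E) (x0 : E) (d : R) :=
  forall x, nu (x - x0) <= d -> nu (F x - x0) <= d.

Lemma maps_ball_of_contraction (R : realFieldType) (E : normedZmodType R)
    (nu : E -> R) c K (F : E -> E) x0 r q d :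
  equivalent_norm nu c K -> contracts_on nu F x0 r q -> 0 <= q -> 0 <= d <= r ->
  nu (F x0 - x0) <= (1 - q) * d -> maps_ball nu F x0 d.
Proof.
move=> hnu contr q0 /andP[d0 dr] drift x hx.
have -> : F x - x0 = (F x - F x0) + (F x0 - x0) by rewrite addrA subrK.
apply: le_trans (equiv_normD hnu _ _) _.
have : nu (F x - F x0) <= q * d.
  have hx0 : nu (x0 - x0) <= r by rewrite subrr (equiv_norm0 hnu) (le_trans d0 dr).
  by apply: le_trans (contr _ _ (le_trans hx dr) hx0) _; exact: ler_wpM2l.
move: drift; set a := nu _; set b := nu _; lra.
Qed.

Lemma geometric_eventually_lt (R : realType) (q C e : R) : 0 <= q < 1 -> 0 < e ->
  exists N : nat, forall n, (N <= n)%N -> C * q ^+ n < e.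
Proof.
move=> /andP[q0 q1] e0.
have e1 : 0 < e / (`|C| + 1) by rewrite divr_gt0 // ltr_wpDl.
have := @cvg_expr _ q; rewrite ger0_norm // => /(_ q1).
move/cvgrPdist_lt => /(_ _ e1) [N _ hN]; exists N => n Nn.
have := hN n Nn; rewrite /= sub0r normrN ger0_norm ?exprn_ge0 // => hqn.
apply: le_lt_trans (ler_norm _) _; rewrite normrM (ger0_norm (exprn_ge0 _ q0)).
apply: le_lt_trans (_ : _ <= (`|C| + 1) * q ^+ n) _.
  by apply: ler_wpM2r; rewrite ?exprn_ge0 // lerDl.
by rewrite mulrC -ltr_pdivlMr // ltr_wpDl.
Qed.

Lemma cvgn_of_geometric_cauchy (R : realType) n (u : nat -> 'rV[R]_n) (C q : R) :
  0 <= q < 1 ->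
  (forall k k', (k <= k')%N -> `|u k - u k'| <= C * q ^+ k) -> cvgn u.
Proof.
move=> hq hu; apply: cauchy_cvg; apply: cauchy_exP => e e0.
have [N hN] := geometric_eventually_lt C hq e0.
exists (u N); exists N => // k /= Nk.
by rewrite -ball_normE /=; apply: le_lt_trans (hu _ _ Nk) (hN _ (leqnn N)).
Qed.

Lemma int_le_nat_offset (m n : int) : m <= n -> exists k : nat, n = m + k%:Z.
Proof. by move=> mn; exists (absz (n - m)%R); rewrite gez0_abs; [ring | lia]. Qed.

Section Pullback.
Variables (R : realType) (l : nat).
Local Notation E := 'rV[R]_l.
Variables (g : int -> E -> E) (nu : E -> R) (c K : R) (x0 : E) (n0 : int).
Variables (q r d : R).
Hypotheses (hnu : equivalent_norm nu c K) (hq : 0 <= q < 1).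
Hypotheses (d_ge0 : 0 <= d) (d_le_r : d <= r).
Hypothesis g_contr : forall n, n <= n0 -> contracts_on nu (g n) x0 r q.
Hypothesis g_ball : forall n, n <= n0 -> maps_ball nu (g n) x0 d.
Hypothesis g_cont : forall n, continuous (g n).

Let q_ge0 : 0 <= q. Proof. by case/andP: hq. Qed.

Fixpoint flow (m : int) (k : nat) (x : E) : E :=
  if k is k'.+1 then g (m + k'%:Z) (flow m k' x) else x.

Lemma flowD m a b x : flow m (a + b) x = flow (m + a%:Z) b (flow m a x).
Proof.
elim: b => [|b IH] /=; first by rewrite addn0.
by rewrite addnS /= IH -addrA -PoszD.
Qed.

Lemma flow_ball m k x : m + k%:Z <= n0 + 1 -> nu (x - x0) <= d ->
  nu (flow m k x - x0) <= d.
Proof.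
elim: k => [|k IH] //= mk hx; apply: g_ball; first by lia.
by apply: IH => //; lia.
Qed.

Lemma flow_contract m k x y : m + k%:Z <= n0 + 1 ->
  nu (x - x0) <= d -> nu (y - x0) <= d ->
  nu (flow m k x - flow m k y) <= q ^+ k * nu (x - y).
Proof.
move=> + hx hy; elim: k => [|k IH] /= mk; first by rewrite expr0 mul1r.
apply: le_trans (g_contr _ _ _) _; first by lia.
- by apply: le_trans d_le_r; apply: flow_ball => //; lia.
- by apply: le_trans d_le_r; apply: flow_ball => //; lia.
by rewrite exprS -mulrA; apply: ler_wpM2l => //; apply: IH; lia.
Qed.

Definition pullback_approx (n : int) (k : nat) : E := flow (n - k%:Z) k x0.

Lemma pullback_approx_ball n k : n <= n0 + 1 -> nu (pullback_approx n k - x0) <= d.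
Proof. by move=> h; apply: flow_ball; [lia | rewrite subrr (equiv_norm0 hnu)]. Qed.

Lemma pullback_approx_cauchy n : n <= n0 + 1 -> forall k k', (k <= k')%N ->
  `|pullback_approx n k - pullback_approx n k'| <= (K * d) * q ^+ k.
Proof.
move=> hn k k' kk'; have x0_ball : nu (x0 - x0) <= d.
  by rewrite subrr (equiv_norm0 hnu).
have -> : pullback_approx n k' =
    flow (n - k%:Z) k (flow (n - k'%:Z) (k' - k) x0).
  have -> : n - k%:Z = (n - k'%:Z) + (k' - k)%N%:Z by lia.
  by rewrite /pullback_approx -flowD subnK.
apply: le_trans (equiv_norm_ge hnu _) _.
rewrite mulrAC -mulrA; apply: ler_wpM2l; first exact: ltW (equiv_norm_K_gt0 hnu).
apply: le_trans (flow_contract _ _ _) _ => //; first by lia.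
  by apply: flow_ball => //; lia.
apply: ler_wpM2l; first exact: exprn_ge0.
by rewrite (equiv_normB hnu); apply: flow_ball => //; lia.
Qed.

Lemma pullback_approx_succ n k :
  pullback_approx (n + 1) k.+1 = g n (pullback_approx n k).
Proof.
rewrite /pullback_approx /=; have -> : n + 1 - k.+1%:Z = n - k%:Z by lia.
by congr g; lia.
Qed.

Lemma pullback_approx_shift_cvg n u : pullback_approx n @ \oo --> u ->
  pullback_approx (n + 1) @ \oo --> g n u.
Proof.
move=> hu; rewrite -cvg_shiftS.
under eq_fun do rewrite pullback_approx_succ.
by apply: continuous_cvg; [exact: g_cont | exact: hu].
Qed.

Lemma pullback_approx_cvg n : cvgn (pullback_approx n).
Proof.
have [hn|hn] := lerP n (n0 + 1).
  exact: cvgn_of_geometric_cauchy hq (pullback_approx_cauchy hn).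
(* Past n0 the maps need not contract: convergence is carried forward by
   continuity of g. *)
have [k ->] := int_le_nat_offset (ltW hn).
elim: k => [|k IH].
  rewrite addr0; apply: cvgn_of_geometric_cauchy hq _.
  by apply: pullback_approx_cauchy; lia.
have -> : n0 + 1 + k.+1%:Z = (n0 + 1 + k%:Z) + 1 by lia.
apply/cvg_ex; exists (g (n0 + 1 + k%:Z) (lim (pullback_approx (n0 + 1 + k%:Z) @ \oo))).
exact: pullback_approx_shift_cvg IH.
Qed.

Definition pullback (n : int) : E := lim (pullback_approx n @ \oo).

Lemma pullback_solution n : pullback (n + 1) = g n (pullback n).
Proof.
apply: cvg_lim; first exact: norm_hausdorff.
exact: pullback_approx_shift_cvg (@pullback_approx_cvg n).
Qed.

Lemma pullback_ball n : n <= n0 + 1 -> nu (pullback n - x0) <= d.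
Proof.
move=> hn; apply/ler_addgt0Pr => e e0.
have ec : 0 < e / c by rewrite divr_gt0 ?(equiv_norm_c_gt0 hnu).
have := @pullback_approx_cvg n; move/cvgrPdist_lt => /(_ _ ec) [k _ hk].
apply: le_trans (equiv_norm_triangle hnu _ (pullback_approx n k) _) _.
rewrite addrC; apply: lerD; first exact: pullback_approx_ball.
apply: le_trans (equiv_norm_le hnu _) _.
rewrite mulrC -ler_pdivlMr ?(equiv_norm_c_gt0 hnu) //.
by apply/ltW/hk => /=.
Qed.

Lemma backward_bounded_solution_unique (x y : int -> E) :
  (forall n, x (n + 1) = g n (x n)) -> (forall n, y (n + 1) = g n (y n)) ->
  (forall n, n <= n0 -> nu (x n - x0) <= r) ->
  (forall n, n <= n0 -> nu (y n - x0) <= r) -> x = y.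
Proof.
move=> hx hy bx byy.
have close k n : n <= n0 -> nu (x n - y n) <= q ^+ k * (r + r).
  elim: k n => [|k IH] n hn.
    rewrite expr0 mul1r; apply: le_trans (equiv_norm_triangle hnu _ x0 _) _.
    by apply: lerD; [exact: bx | rewrite (equiv_normB hnu); exact: byy].
  have -> : n = (n - 1) + 1 by ring.
  rewrite hx hy; apply: le_trans (g_contr _ _ _) _; first by lia.
  - by apply: bx; lia.
  - by apply: byy; lia.
  by rewrite exprS -mulrA; apply: ler_wpM2l => //; apply: IH; lia.
have eq_past n : n <= n0 -> x n = y n.
  move=> hn; apply/eqP; rewrite -subr_eq0 -normr_le0.
  apply: le_trans (equiv_norm_ge hnu _) _.
  rewrite pmulr_rle0 ?(equiv_norm_K_gt0 hnu) // leNgt; apply/negP => pos.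
  have [k hk] := geometric_eventually_lt (r + r) hq pos.
  by have := hk k (leqnn k); rewrite mulrC ltNge close.
apply: funext => n; have [hn|hn] := lerP n n0; first exact: eq_past.
have [k ->] := int_le_nat_offset (ltW hn).
elim: k => [|k IH]; first by rewrite addr0; apply: eq_past.
have -> : n0 + k.+1%:Z = (n0 + k%:Z) + 1 by lia.
by rewrite hx hy IH.
Qed.

Theorem pullback_exists_unique : exists x : int -> E,
  [/\ forall n, x (n + 1) = g n (x n),
      forall n, n <= n0 -> nu (x n - x0) <= d &
      forall y, (forall n, y (n + 1) = g n (y n)) ->
        (forall n, n <= n0 -> nu (y n - x0) <= r) -> y = x].
Proof.
exists pullback; split=> [|n hn|y hy by_].
- exact: pullback_solution.
- by apply: pullback_ball; lia.
apply: backward_bounded_solution_unique => //; first exact: pullback_solution.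
by move=> n hn; apply: le_trans d_le_r; apply: pullback_ball; lia.
Qed.

End Pullback.

(** * Uniform contraction near a stable fixed point *)

Lemma contracts_on_of_linearization (R : realType) n (nu : 'rV[R]_n -> R) c K
    (F : 'rV[R]_n -> 'rV[R]_n) (A : 'M[R]_n) x0 k rho :
  equivalent_norm nu c K -> k <= 1 -> 0 < rho ->
  (forall v, nu (v *m A^T) <= k * nu v) ->
  (forall x y, `|x - x0| < rho -> `|y - x0| < rho ->
    `|F x - F y - (x - y) *m A^T| <= (1 - k) / (2 * c * K) * `|x - y|) ->
  contracts_on nu F x0 (rho / (2 * K)) ((1 + k) / 2).
Proof.
move=> hnu k1 rho0 nuA lin x y hx hy.
have c0 := equiv_norm_c_gt0 hnu; have K0 := equiv_norm_K_gt0 hnu.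
have near_x0 z : nu (z - x0) <= rho / (2 * K) -> `|z - x0| < rho.
  move=> hz; apply: le_lt_trans (equiv_norm_ge hnu _) _.
  apply: le_lt_trans (_ : K * (rho / (2 * K)) < rho); last first.
    have -> : K * (rho / (2 * K)) = rho / 2 by field; rewrite gt_eqF.
    lra.
  by apply: ler_wpM2l; [exact: ltW | exact: hz].
have -> : F x - F y = (x - y) *m A^T + (F x - F y - (x - y) *m A^T).
  by rewrite addrCA subrr addr0.
apply: le_trans (equiv_normD hnu _ _) _.
apply: le_trans (lerD (nuA _) (equiv_norm_le hnu _)) _.
have err : c * `|F x - F y - (x - y) *m A^T| <= (1 - k) / 2 * nu (x - y).
  apply: le_trans (ler_wpM2l (ltW c0) (lin _ _ (near_x0 _ hx) (near_x0 _ hy))) _.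
  have -> : c * ((1 - k) / (2 * c * K) * `|x - y|) = (1 - k) / 2 * (`|x - y| / K).
    by field; rewrite !gt_eqF.
  apply: ler_wpM2l; first by rewrite divr_ge0 ?subr_ge0.
  by rewrite ler_pdivrMr // mulrC (equiv_norm_ge hnu).
apply: le_trans (lerD (lexx _) err) _; rewrite -mulrDl.
by apply: ler_wpM2r; [exact: equiv_norm_ge0 hnu _ | lra].
Qed.

Lemma continuous_first (R : realType) l m (f : 'rV[R]_l * 'rV[R]_m -> 'rV[R]_l)
    (lam : 'rV[R]_m) :
  (forall p, differentiable f p) -> continuous (fun x => f (x, lam)).
Proof.
move=> df x; apply: differentiable_continuous.
by apply: (@differentiable_comp _ _ _ _ (fun x => (x, lam)) f).
Qed.

Lemma continuous_second (R : realType) l m (f : 'rV[R]_l * 'rV[R]_m -> 'rV[R]_l)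
    (x : 'rV[R]_l) :
  (forall p, differentiable f p) -> continuous (fun lam => f (x, lam)).
Proof.
move=> df lam; apply: differentiable_continuous.
by apply: (@differentiable_comp _ _ _ _ (fun lam => (x, lam)) f).
Qed.

Lemma stable_fixed_point_contraction (R : realType) l m
    (f : 'rV[R]_l * 'rV[R]_m -> 'rV[R]_l) xs lams :
  C1_prod f -> f (xs, lams) = xs -> spectral_radius_lt1 (Dxf f xs lams) ->
  exists nu c K q r, [/\ equivalent_norm nu c K, 0 <= q < 1, 0 < r &
    forall d, 0 < d -> d <= r -> \forall lam \near lams,
      contracts_on nu (fun x => f (x, lam)) xs r q /\
      maps_ball nu (fun x => f (x, lam)) xs d].
Proof.
move=> hC fixed spec.
have [nu [c [K [k [hnu /andP[k0 k1] nuA]]]]] := adapted_norm spec.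
have c0 := equiv_norm_c_gt0 hnu; have K0 := equiv_norm_K_gt0 hnu.
have eta0 : 0 < (1 - k) / (2 * c * K) by rewrite divr_gt0 ?subr_gt0 // !mulr_gt0.
have [rho rho0 lin] := partial_linearization xs lams hC eta0.
have hq : 0 <= (1 + k) / 2 < 1 by apply/andP; split; lra.
exists nu, c, K, ((1 + k) / 2), (rho / (2 * K)); split => // [|d d0 dr].
  by rewrite divr_gt0 // mulr_gt0.
have contr lam : `|lam - lams| < rho ->
    contracts_on nu (fun x => f (x, lam)) xs (rho / (2 * K)) ((1 + k) / 2).
  move=> hl; apply: contracts_on_of_linearization hnu (ltW k1) rho0 nuA _.
  by move=> x y hx hy; exact: lin.
have drift0 : 0 < (1 - (1 + k) / 2) * d / c by rewrite divr_gt0 // mulr_gt0 //; lra.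
have := @continuous_second _ _ _ f xs hC.1 lams.
move/cvgrPdist_lt => /(_ _ drift0) near_drift.
near=> lam.
have hl : `|lam - lams| < rho.
  rewrite distrC; near: lam; apply/nbhs_ballP; exists rho => // z.
  by rewrite -ball_normE.
split; first exact: contr hl.
apply: (maps_ball_of_contraction hnu (contr _ hl)); first by case/andP: hq.
  by rewrite (ltW d0).
apply: le_trans (equiv_norm_le hnu _) _; rewrite mulrC -ler_pdivlMr //.
rewrite -[X in `|_ - X|]fixed distrC.
by apply: ltW; near: lam.
Unshelve. all: by end_near.
Qed.

Section EuclideanNorm.
Variables (R : realType) (n : nat).
Implicit Type v : 'rV[R]_n.

Lemma mx_norm_le_enorm v : `|v| <= enorm v.
Proof.
apply: mx_normr_le; first exact: sqrtr_ge0.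
move=> i j; rewrite (ord1 i) -sqrtr_sqr /enorm ler_sqrt; last first.
  by apply: sumr_ge0 => k _; exact: sqr_ge0.
by rewrite (bigD1 j) //= lerDl; apply: sumr_ge0 => k _; exact: sqr_ge0.
Qed.

Lemma enorm_le_mx_norm v : enorm v <= n%:R * `|v|.
Proof.
have h0 : 0 <= n%:R * `|v| by rewrite mulr_ge0.
rewrite /enorm -[leRHS]ger0_norm // -sqrtr_sqr ler_sqrt ?sqr_ge0 //.
apply: le_trans (_ : \sum_(i < n) `|v| ^+ 2 <= _).
  apply: ler_sum => i _; have vi := normr_entry_le v ord0 i.
  rewrite -[v ord0 i ^+ 2]ger0_norm ?sqr_ge0 // normrX !expr2.
  by apply: ler_pM; rewrite ?normr_ge0.
rewrite sumr_const card_ord -[`|v| ^+ 2 *+ n]mulr_natl exprMn.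
apply: ler_wpM2r; first exact: sqr_ge0.
by rewrite -natrX ler_nat; nia.
Qed.

Lemma enorm_lt_of_equiv_norm nu c K v eps :
  equivalent_norm nu c K -> 0 < eps -> nu v <= eps / (K * n.+1%:R) ->
  enorm v < eps.
Proof.
move=> hnu eps0 hv; have K0 := equiv_norm_K_gt0 hnu.
apply: le_lt_trans (enorm_le_mx_norm v) _.
apply: le_lt_trans (_ : n%:R * (eps / n.+1%:R) < eps).
  apply: ler_wpM2l => //; apply: le_trans (equiv_norm_ge hnu v) _.
  apply: le_trans (ler_wpM2l (ltW K0) hv) _.
  have -> : K * (eps / (K * n.+1%:R)) = eps / n.+1%:R.
    by field; rewrite paddr_eq0 ?ler0n // oner_eq0 /= gt_eqF.
  exact: lexx.
by rewrite mulrCA gtr_pMr // ltr_pdivrMr ?ltr0n // mul1r ltr_nat.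
Qed.

Lemma equiv_norm_le_of_enorm_lt nu c K v eps r :
  equivalent_norm nu c K -> enorm v < eps -> eps <= r / c -> nu v <= r.
Proof.
move=> hnu hv epsr; have c0 := equiv_norm_c_gt0 hnu.
apply: le_trans (equiv_norm_le hnu v) _; rewrite mulrC -ler_pdivlMr //.
exact/ltW/(le_lt_trans (mx_norm_le_enorm v))/(lt_le_trans hv).
Qed.

End EuclideanNorm.

Lemma scaled_past_lt (R : realType) (t M : R) (N : nat) (n : int) :
  0 < t -> - M < t * N%:R -> n <= - N%:Z -> t * n%:~R < M.
Proof.
move=> t0 tN nN; have : (n%:~R : R) <= (- N%:Z)%:~R by rewrite ler_int.
rewrite mulrNz -pmulrn => /(ler_wpM2l (ltW t0)); lra.
Qed.

Unset Implicit Arguments. Set Strict Implicit. Set Printing Implicit Defensive.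

Theorem mainTheorem8 (R : realType) (l m : nat)
  (f : 'rV[R]_l * 'rV[R]_m -> 'rV[R]_l) (Lam : R -> 'rV[R]_m)
  (lam_m lam_p : 'rV[R]_m) (X : R -> 'rV[R]_l) (Xm Xp : 'rV[R]_l) :
  C1_prod f ->
  parameter_shift Lam lam_m lam_p ->
  stable_path f Lam lam_m lam_p X Xm Xp ->
  exists eps0 : R, 0 < eps0 /\
    forall eps : R, 0 < eps -> eps < eps0 ->
    exists S : R, 0 < S /\
      forall (r : R) (N : nat), 0 < r -> (0 < N)%N -> S < r * N%:R ->
      exists! x : int -> 'rV[R]_l,
        is_solution f Lam r x /\
        (forall n : int, n <= - (N%:Z) -> enorm (x n - Xm) < eps).
Proof.
move=> hC [_ hLam _ _ _] [_ [_ [_ [_ [fixed [_ [_ [spec _]]]]]]]].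
have [nu [c [K [q [r0 [hnu hq r0_gt0 local]]]]]] :=
  stable_fixed_point_contraction hC fixed spec.
have [c0 K0] := (equiv_norm_c_gt0 hnu, equiv_norm_K_gt0 hnu).
exists (r0 / c); split=> [|eps eps0 eps_lt]; first by rewrite divr_gt0.
pose d := Num.min r0 (eps / (K * l.+1%:R)).
have d0 : 0 < d by rewrite lt_min r0_gt0 divr_gt0 ?mulr_gt0 ?ltr0n.
have dr : d <= r0 by rewrite ge_min lexx.
have [M [_ hM]] := hLam _ (local d d0 dr).
exists (Num.max 1 (- M)); split=> [|t N t0 _ hS]; first by rewrite lt_max ltr01.
have past n : n <= - N%:Z -> t * n%:~R < M.
  by apply: scaled_past_lt => //; apply: le_lt_trans hS; rewrite le_max lexx orbT.
have [x [xsol xball xuniq]] :=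
  @pullback_exists_unique R l (fun n x => f (x, Lam (t * n%:~R))) nu c K Xm
    (- N%:Z) q r0 d hnu hq (ltW d0) dr (fun n hn => (hM _ (past n hn)).1)
    (fun n hn => (hM _ (past n hn)).2) (fun n => continuous_first hC.1).
exists x; split=> [|y [ysol ybound]].
  split=> // n hn; apply: enorm_lt_of_equiv_norm hnu eps0 _.
  by apply: le_trans (xball n hn) _; rewrite ge_min lexx orbT.
apply/esym/xuniq => // n hn.
exact: equiv_norm_le_of_enorm_lt hnu (ybound n hn) (ltW eps_lt).
Qed.
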